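(* The function $\mathcal{R}(t,D_1,D_2)$ is jointly multiplicative in $t,D_1,D_2$: for all integers $t$ and positive integers $C_1,C_2,E_1,E_2$ with $\gcd(C_1C_2,E_1E_2)=1$, \[ \mathcal{R}(t,C_1E_1,C_2E_2)=\mathcal{R}(t,C_1,C_2)\,\mathcal{R}(t,E_1,E_2). \]
   Context: Notation: $e(x)=e^{2\pi ix}$. For integers $m_1,m_2,n_1,n_2$ and positive integers $D_1,D_2$, the $GL_3$ Kloosterman sum is \[ S(m_1,m_2,n_1,n_2;D_1,D_2)=\sum e\Big(\frac{m_1B_1+n_1(Y_1D_2-Z_1B_2)}{D_1}\Big)e\Big(\frac{m_2B_2+n_2(Y_2D_1-Z_2B_1)}{D_2}\Big), \] the sum over $B_1,C_1 \bmod D_1$, $B_2,C_2\bmod D_2$ with $\gcd(B_1,C_1,D_1)=\gcd(B_2,C_2,D_2)=1$ and $D_1C_2+B_1B_2+C_1D_2\equiv 0\pmod{D_1D_2}$, where $Y_1B_1+Z_1C_1\equiv 1\pmod{D_1}$, $Y_2B_2+Z_2C_2\equiv1\pmod{D_2}$ (independent of choices). For integers $a,b$ with $(a,D_1)=(b,D_2)=1$ and integers $u,t$, define \[ \widehat S(a,u,t,b;D_1,D_2)=\frac{1}{D_1D_2}\sum_{x\bmod D_1}\sum_{y\bmod D_2}S(a,y,x,b;D_1,D_2)\,e\Big(\frac{-xt}{D_1}\Big)e\Big(\frac{-yu}{D_2}\Big), \] and \[ \mathcal{R}(t,D_1,D_2)=\max_{(ab,D_1)=1}\ \sum_{u\bmod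 D_2}\big|\widehat S(a,u,bt,1;D_1,D_2)\big|, \] the maximum over integers $a,b$ coprime to $D_1$. *)

From HB Require Import structures.
From mathcomp Require Import all_boot all_order all_algebra.
From mathcomp Require Import reals trigo.
From mathcomp.real_closed Require Import complex.
Set Implicit Arguments. Unset Strict Implicit. Unset Printing Implicit Defensive.
Import Order.TTheory GRing.Theory Num.Theory.
Local Open Scope ring_scope.
Local Open Scope complex_scope.

Section Defs.
Variable R : realType.

Definition ee (x : R) : R[i] := (cos (2 * pi * x)) +i* (sin (2 * pi * x)).

Definition eD (k : int) (D : nat) : R[i] := ee (k%:~R / D%:R).

(* A choice of (Y, Z) with Y*B + Z*C = 1 (mod D), when gcd(B,C,D) = 1 *)
Definition bez (D B C : nat) : int * int :=
  match [pick p : 'I_D * 'I_D | (p.1 * B + p.2 * C) %% D == 1 %% D]%N with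
  | Some p => ((p.1 : nat)%:Z, (p.2 : nat)%:Z)
  | None => (0, 0)
  end.

Definition KlS (m1 m2 n1 n2 : int) (D1 D2 : nat) : R[i] :=
  \sum_(B1 < D1) \sum_(C1 < D1) \sum_(B2 < D2) \sum_(C2 < D2)
    if [&& gcdn (gcdn B1 C1) D1 == 1%N, gcdn (gcdn B2 C2) D2 == 1%N
         & (D1 * D2 %| D1 * C2 + B1 * B2 + C1 * D2)%N]
    then
      let YZ1 := bez D1 B1 C1 in
      let YZ2 := bez D2 B2 C2 in
      eD (m1 * (B1 : nat)%:Z
          + n1 * (YZ1.1 * (D2 : nat)%:Z - YZ1.2 * (B2 : nat)%:Z)) D1
      * eD (m2 * (B2 : nat)%:Z
          + n2 * (YZ2.1 * (D1 : nat)%:Z - YZ2.2 * (B1 : nat)%:Z)) D2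
    else 0.

Definition Shat (a u t b : int) (D1 D2 : nat) : R[i] :=
  (D1 * D2)%:R^-1 *
  \sum_(x < D1) \sum_(y < D2)
     KlS a (y : nat)%:Z (x : nat)%:Z b D1 D2
     * eD (- ((x : nat)%:Z * t)) D1 * eD (- ((y : nat)%:Z * u)) D2.

Definition cabs (z : R[i]) : R := complex.Re `|z|.

Definition Rcal (t : int) (D1 D2 : nat) : R :=
  \big[Num.max/0]_(a < D1 | coprime a D1)
   \big[Num.max/0]_(b < D1 | coprime b D1)
     \sum_(u < D2) cabs (Shat (a : nat)%:Z (u : nat)%:Z ((b : nat)%:Z * t) 1 D1 D2).

End Defs.

From HB Require Import structures.
From mathcomp Require Import all_boot all_order all_algebra.
From mathcomp Require Import reals trigo.
From mathcomp.real_closed Require Import complex.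
From mathcomp Require Import ring lra.
Set Implicit Arguments. Unset Strict Implicit. Unset Printing Implicit Defensive.
Import Order.TTheory GRing.Theory Num.Theory.
Local Open Scope ring_scope.

(** Orthogonality of the additive characters in [x] and [y] collapses [Shat a u t 1 D1 D2]
    to the sum of [e(a B1 / D1) e((Y2 D1 - Z2 B1) / D2)] over the admissible
    [(B1, C1, B2, C2)] with [B2 = u] and [t B1 = D2], [t C1 = -B2] (mod D1).  For
    [D1 = c1 e1], [D2 = c2 e2] with [(c1 c2, e1 e2) = 1], a Chinese-remainder change of
    variables, twisted by inverses of [e1], [e2] modulo [c1 c2] and of [c1], [c2] modulo
    [e1 e2], splits every summand into a summand for [(c1, c2)] times one for [(e1, e2)],
    with [a], [t] and [u] multiplied by units.  So the sum over [u] of [|Shat|] factors,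
    and as multiplication by these units permutes the residues coprime to [c1] and to [e1],
    so do the maxima over [a] and [b]. *)

Definition affmod (l s c x : nat) := ((l * x + s) %% c)%N.

Lemma Posz_modn (x d : nat) : (x %% d)%N%:Z = x%:Z - (x %/ d)%N%:Z * d%:Z.
Proof. by rewrite {2}(divn_eq x d) PoszD PoszM addrC addKr. Qed.

Lemma affmod_lt (l s c x : nat) : (0 < c)%N -> (affmod l s c x < c)%N.
Proof. by move=> c0; rewrite /affmod ltn_pmod. Qed.

Lemma affmod_eq_dvdz (l s c x y : nat) : coprime l c ->
  affmod l s c x = affmod l s c y -> (c%:Z %| x%:Z - y%:Z)%Z.
Proof.
move=> lc /eqP; rewrite -eqz_nat -!modz_nat eqz_mod_dvd !PoszD !PoszM.
rewrite (_ : _ - _ = l%:Z * (x%:Z - y%:Z)); last by ring.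
by rewrite Gauss_dvdzr // coprimez_sym coprimezE.
Qed.

Lemma affmod_crt_inj (c e l m s s' x y : nat) :
  coprime c e -> coprime l c -> coprime m e -> (x < c * e)%N -> (y < c * e)%N ->
  affmod l s c x = affmod l s c y -> affmod m s' e x = affmod m s' e y -> x = y.
Proof.
move=> ce lc me xl yl /(affmod_eq_dvdz lc) dc /(affmod_eq_dvdz me) de.
have : (x%:Z == y%:Z %[mod (c * e)%N%:Z])%Z.
  by rewrite PoszM zchinese_remainder ?coprimezE // !eqz_mod_dvd dc de.
by rewrite !modz_nat !modn_small // => /eqP [].
Qed.

Lemma affmod_crt_bij (c e l m s s' : nat) (c0 : (0 < c)%N) (e0 : (0 < e)%N) :
  coprime c e -> coprime l c -> coprime m e ->
  bijective (fun x : 'I_(c * e) =>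
    (Ordinal (affmod_lt l s x c0), Ordinal (affmod_lt m s' x e0))).
Proof.
move=> ce lc me; apply: inj_card_bij; last by rewrite card_prod !card_ord.
move=> x y [hc he]; apply: val_inj.
exact: (affmod_crt_inj ce lc me (ltn_ord x) (ltn_ord y) hc he).
Qed.

Lemma sum_affmod_crt (V : comPzRingType) (c e l m s s' : nat) (A B : nat -> V) :
  (0 < c)%N -> (0 < e)%N -> coprime c e -> coprime l c -> coprime m e ->
  \sum_(x < c * e) A (affmod l s c x) * B (affmod m s' e x)
    = (\sum_(i < c) A i) * (\sum_(j < e) B j).
Proof.
move=> c0 e0 ce lc me; rewrite mulr_suml.
under [RHS]eq_bigr do rewrite mulr_sumr.
rewrite pair_bigA /=.
by rewrite (reindex _ (onW_bij _ (affmod_crt_bij s s' c0 e0 ce lc me))).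
Qed.

Lemma bigmax_affmod_crt (R : realDomainType) (c e l m : nat) (G : nat -> nat -> R) :
  (0 < c)%N -> (0 < e)%N -> coprime c e -> coprime l c -> coprime m e ->
  \big[Num.max/0]_(x < c * e | coprime x (c * e)) G (affmod l 0 c x) (affmod m 0 e x) =
  \big[Num.max/0]_(i < c | coprime i c) \big[Num.max/0]_(j < e | coprime j e) G i j.
Proof.
move=> c0 e0 ce lc me; rewrite (pair_big_idem (maxxx 0)) /=.
rewrite (reindex _ (onW_bij _ (affmod_crt_bij 0 0 c0 e0 ce lc me))) /=.
apply: eq_bigl => x /=.
by rewrite /affmod !addn0 !coprime_modl !coprimeMl lc me /= coprimeMr.
Qed.

Section BigMax.
Variable R : realDomainType.

Lemma bigmax_ge0 (I : finType) (P : pred I) (F : I -> R) :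
  0 <= \big[Num.max/0]_(i | P i) F i.
Proof. by elim/big_rec: _ => // i x _ hx; rewrite le_max hx orbT. Qed.

Lemma mulr_bigmaxr (I : finType) (P : pred I) (F : I -> R) (y : R) : 0 <= y ->
  y * \big[Num.max/0]_(i | P i) F i = \big[Num.max/0]_(i | P i) (y * F i).
Proof.
move=> y_ge0; apply: (big_morph (fun z => y * z)); last exact: mulr0.
by move=> a b; apply: maxr_pMr.
Qed.

Lemma mulr_bigmaxl (I : finType) (P : pred I) (F : I -> R) (y : R) : 0 <= y ->
  (\big[Num.max/0]_(i | P i) F i) * y = \big[Num.max/0]_(i | P i) (F i * y).
Proof.
by move=> y_ge0; rewrite mulrC mulr_bigmaxr //; apply: eq_bigr => i _; rewrite mulrC.
Qed.

Lemma bigmax2_mul (I J : finType) (P P' : pred I) (Q Q' : pred J)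
    (F : I -> I -> R) (G : J -> J -> R) :
  (forall i i', 0 <= F i i') ->
  \big[Num.max/0]_(i | P i) \big[Num.max/0]_(j | Q j)
    \big[Num.max/0]_(i' | P' i') \big[Num.max/0]_(j' | Q' j') (F i i' * G j j') =
  (\big[Num.max/0]_(i | P i) \big[Num.max/0]_(i' | P' i') F i i') *
  (\big[Num.max/0]_(j | Q j) \big[Num.max/0]_(j' | Q' j') G j j').
Proof.
move=> F_ge0; rewrite mulr_bigmaxl ?bigmax_ge0 //; apply: eq_bigr => i _.
rewrite (exchange_big_idem (maxxx 0)) mulr_bigmaxl ?bigmax_ge0 //; apply: eq_bigr => i' _.
by rewrite mulr_bigmaxr //; apply: eq_bigr => j _; rewrite mulr_bigmaxr.
Qed.

End BigMax.

Definition primitive (D B C : nat) := gcdn (gcdn B C) D == 1%N.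

Lemma primitiveP (D B C : nat) :
  reflect (exists Y Z : int, (D%:Z %| Y * B%:Z + Z * C%:Z - 1)%Z) (primitive D B C).
Proof.
apply: (iffP idP) => [h | [Y [Z hd]]].
  have [u [v huv]] := Bezoutz B%:Z C%:Z.
  have [s [w hsw]] := Bezoutz (gcdz B%:Z C%:Z) D%:Z.
  have g1 : gcdz (gcdz B%:Z C%:Z) D%:Z = 1 by rewrite /gcdz /= (eqP h).
  exists (s * u), (s * v).
  rewrite (_ : _ - 1 = - w * D%:Z); first by rewrite dvdz_mull.
  by rewrite -g1 -hsw -huv; ring.
set d := gcdn (gcdn B C) D.
have dB : (d%:Z %| B%:Z)%Z by rewrite dvdzE /= (dvdn_trans (dvdn_gcdl _ _)) // dvdn_gcdl.
have dC : (d%:Z %| C%:Z)%Z by rewrite dvdzE /= (dvdn_trans (dvdn_gcdl _ _)) // dvdn_gcdr.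
have dD : (d%:Z %| D%:Z)%Z by rewrite dvdzE /= dvdn_gcdr.
suff : (d%:Z %| 1%R)%Z by rewrite dvdz1.
rewrite (_ : 1 = Y * B%:Z + Z * C%:Z - (Y * B%:Z + Z * C%:Z - 1)); last by ring.
by rewrite rpredB ?(dvdz_trans dD hd) // rpredD ?dvdz_mull.
Qed.

Lemma bez_spec (D B C : nat) : (0 < D)%N -> primitive D B C ->
  (D%:Z %| (bez D B C).1 * B%:Z + (bez D B C).2 * C%:Z - 1)%Z.
Proof.
have modE (n : nat) : (n %% D == 1 %% D)%N = (D%:Z %| n%:Z - 1)%Z.
  by rewrite -eqz_mod_dvd !modz_nat eqz_nat.
move=> D0 /primitiveP [Y [Z hd]]; rewrite /bez; case: pickP => [p /= | none].
  by rewrite modE PoszD !PoszM.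
have Dz : D%:Z != 0 by rewrite eqz_nat -lt0n.
pose y := `|(Y %% D%:Z)%Z|%N; pose z := `|(Z %% D%:Z)%Z|%N.
have yE : y%:Z = (Y %% D%:Z)%Z by rewrite /y gez0_abs // modz_ge0.
have zE : z%:Z = (Z %% D%:Z)%Z by rewrite /z gez0_abs // modz_ge0.
have yl : (y < D)%N by rewrite -ltz_nat yE -[X in _ < X]gez0_abs // ltz_mod.
have zl : (z < D)%N by rewrite -ltz_nat zE -[X in _ < X]gez0_abs // ltz_mod.
move: (none (Ordinal yl, Ordinal zl)); rewrite /= modE PoszD !PoszM yE zE.
rewrite (_ : _ - 1 = (Y * B%:Z + Z * C%:Z - 1)
    - ((Y %/ D%:Z)%Z * B%:Z + (Z %/ D%:Z)%Z * C%:Z) * D%:Z).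
  by rewrite rpredB ?dvdz_mull.
move: (divz_eq Y D%:Z) (divz_eq Z D%:Z).
set qY := (Y %/ D%:Z)%Z; set rY := (Y %% D%:Z)%Z.
set qZ := (Z %/ D%:Z)%Z; set rZ := (Z %% D%:Z)%Z.
by move=> -> ->; ring.
Qed.

(* With [Y B + Z C = 1] and [B B' + C D' = 0] (mod D), the residue [Y D' - Z B'] is the unique
   [r] with [r B = D'] and [r C = -B'] (mod D); in particular it does not depend on [(Y, Z)]. *)
Lemma dvdz_bez_phaseE (D B C B' D' Y Z r : int) :
  (D %| Y * B + Z * C - 1)%Z -> (D %| B * B' + C * D')%Z ->
  (D %| (Y * D' - Z * B') - r)%Z = (D %| r * B - D')%Z && (D %| r * C + B')%Z.
Proof.
move=> hYZ hK; set P := Y * D' - Z * B'.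
have hPB : (D %| P * B - D')%Z.
  rewrite (_ : _ - _ = D' * (Y * B + Z * C - 1) - Z * (B * B' + C * D'));
    last by rewrite /P; ring.
  by rewrite rpredB ?dvdz_mull.
have hPC : (D %| P * C + B')%Z.
  rewrite (_ : _ + _ = Y * (B * B' + C * D') - B' * (Y * B + Z * C - 1));
    last by rewrite /P; ring.
  by rewrite rpredB ?dvdz_mull.
apply/idP/andP => [hr | [hB hC]].
  rewrite (_ : r * B - D' = (P * B - D') - (P - r) * B); last by ring.
  rewrite (_ : r * C + B' = (P * C + B') - (P - r) * C); last by ring.
  by split; apply: rpredB => //; apply: dvdz_mulr.
rewrite (_ : P - r = Y * ((P * B - D') - (r * B - D')) + Z * ((P * C + B') - (r * C + B'))
                     - (P - r) * (Y * B + Z * C - 1)); last by ring.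
by apply: rpredB; [apply: rpredD; apply: dvdz_mull; apply: rpredB | apply: dvdz_mull].
Qed.

Lemma coprimez_of_inv (d x y : int) : (d %| x * y - 1)%Z -> coprimez x d.
Proof.
move=> h; apply/eqP; suff : (gcdz x d %| 1%R)%Z by rewrite dvdz1 /gcdz /= => /eqP ->.
rewrite (_ : 1 = y * x - (x * y - 1)); last by ring.
by rewrite rpredB ?dvdz_mull ?dvdz_gcdl // (dvdz_trans (dvdz_gcdr x d) h).
Qed.

(* [(b, g)] is the image of [(B, C)] under the matrix [[M, 0], [k M, L]], invertible mod [d]. *)
Lemma primitive_lin_change (d B C b g : nat) (L L' M M' k : int) :
  (d%:Z %| L * L' - 1)%Z -> (d%:Z %| M * M' - 1)%Z -> (d%:Z %| b%:Z - M * B%:Z)%Z ->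
  (d%:Z %| g%:Z - (L * C%:Z + k * b%:Z))%Z -> primitive d b g = primitive d B C.
Proof.
move=> hL hM hb hg; apply/primitiveP/primitiveP => -[Y [Z h]].
  exists ((Y + Z * k) * M), (Z * L).
  rewrite (_ : _ - 1 = (Y * b%:Z + Z * g%:Z - 1) - Y * (b%:Z - M * B%:Z)
     - Z * (g%:Z - (L * C%:Z + k * b%:Z)) - (Z * k) * (b%:Z - M * B%:Z)); last by ring.
  by do 3 (apply: rpredB; last exact: dvdz_mull).
exists (Y * M' - Z * L' * k), (Z * L').
rewrite (_ : _ - 1 = (Y * B%:Z + Z * C%:Z - 1) + (Y * M') * (b%:Z - M * B%:Z)
  + (Z * L') * (g%:Z - (L * C%:Z + k * b%:Z)) + (Y * B%:Z) * (M * M' - 1)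
  + (Z * C%:Z) * (L * L' - 1)); last by ring.
by do 4 (apply: rpredD; last exact: dvdz_mull).
Qed.

Lemma exists_modinv (n x : nat) : (0 < n)%N -> coprime x n ->
  exists y : nat, (n%:Z %| y%:Z * x%:Z - 1)%Z.
Proof.
move=> n_gt0 cop; have [u [v huv]] := Bezoutz x%:Z n%:Z.
have nz : n%:Z != 0 by rewrite eqz_nat -lt0n.
have g1 : gcdz x%:Z n%:Z = 1 by apply/eqP; rewrite -/(coprimez _ _) coprimezE.
exists `|(u %% n%:Z)%Z|%N; rewrite gez0_abs ?modz_ge0 //.
rewrite (_ : _ - 1 = (u * x%:Z + v * n%:Z - 1) - ((u %/ n%:Z)%Z * x%:Z + v) * n%:Z); last first.
  by move: (divz_eq u n%:Z); set q := (u %/ n%:Z)%Z; set r := (u %% n%:Z)%Z => ->; ring.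
by rewrite huv g1 subrr sub0r rpredN dvdz_mull.
Qed.

Definition klcond (D1 D2 B1 C1 B2 C2 : nat) := (D1 * D2 %| D1 * C2 + B1 * B2 + C1 * D2)%N.

Definition tcond (D1 D2 : nat) (t : int) (B1 C1 B2 : nat) :=
  (D1%:Z %| t * B1%:Z - D2%:Z)%Z && (D1%:Z %| t * C1%:Z + B2%:Z)%Z.

Definition phase2 (D1 D2 B1 B2 C2 : nat) : int :=
  (bez D2 B2 C2).1 * D1%:Z - (bez D2 B2 C2).2 * B1%:Z.

Lemma dvdz_factorl (m n : nat) (x : int) : ((m * n)%N%:Z %| x)%Z -> (m%:Z %| x)%Z.
Proof. by apply: dvdz_trans; rewrite PoszM dvdz_mulr. Qed.

Lemma dvdz_factorr (m n : nat) (x : int) : ((m * n)%N%:Z %| x)%Z -> (n%:Z %| x)%Z.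
Proof. by apply: dvdz_trans; rewrite PoszM dvdz_mull. Qed.

Lemma dvdz_coprime_mulE (m n : nat) (x : int) : coprime m n ->
  ((m * n)%N%:Z %| x)%Z = (m%:Z %| x)%Z && (n%:Z %| x)%Z.
Proof. by move=> cop; rewrite PoszM Gauss_dvdz // coprimezE. Qed.

Lemma klcondE (D1 D2 B1 C1 B2 C2 : nat) : klcond D1 D2 B1 C1 B2 C2 =
  ((D1 * D2)%N%:Z %| D1%:Z * C2%:Z + B1%:Z * B2%:Z + C1%:Z * D2%:Z)%Z.
Proof. by rewrite -!PoszM -!PoszD. Qed.

Lemma klcond_dvd1 (D1 D2 B1 C1 B2 C2 : nat) : klcond D1 D2 B1 C1 B2 C2 ->
  (D1%:Z %| B1%:Z * B2%:Z + C1%:Z * D2%:Z)%Z.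
Proof.
rewrite klcondE => /dvdz_factorl h.
by rewrite -(rpredDl _ (dvdz_mulr C2%:Z (dvdzz D1%:Z))) addrA.
Qed.

Lemma klcond_dvd2 (D1 D2 B1 C1 B2 C2 : nat) : klcond D1 D2 B1 C1 B2 C2 ->
  (D2%:Z %| B2%:Z * B1%:Z + C2%:Z * D1%:Z)%Z.
Proof.
rewrite klcondE => /dvdz_factorr h.
rewrite -(rpredDr _ (dvdz_mull C1%:Z (dvdzz D2%:Z))) (mulrC B2%:Z) (mulrC C2%:Z).
by rewrite (addrC (B1%:Z * _)).
Qed.

Lemma tcond_twist_int (c1 c2 e2 ie2 lam t B1 C1 B2 b1 g1 b2 k1 k2 q1 : int) :
  (c1 %| ie2 * e2 - 1)%Z -> coprimez lam c1 ->
  b1 = B1 - k1 * c1 -> g1 = lam * e2 * C1 + k2 * b1 - q1 * c1 -> b2 = lam * B2 - k2 * c2 ->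
  ((c1 %| t * B1 - c2 * e2)%Z && (c1 %| t * C1 + B2)%Z) =
  ((c1 %| (ie2 * t) * b1 - c2)%Z && (c1 %| (ie2 * t) * g1 + b2)%Z).
Proof.
move=> i2 hl hb1 hg1 hb2.
have -> : (c1 %| t * B1 - c2 * e2)%Z = (c1 %| (ie2 * t) * b1 - c2)%Z.
  apply/idP/idP => h.
    rewrite (_ : ie2 * t * b1 - c2 =
      ie2 * (t * B1 - c2 * e2) + c2 * (ie2 * e2 - 1) - (ie2 * t * k1) * c1);
      last by rewrite hb1; ring.
    by rewrite rpredB ?rpredD ?dvdz_mull ?dvdz_mulr.
  rewrite (_ : t * B1 - c2 * e2 =
    e2 * (ie2 * t * b1 - c2) - (t * b1) * (ie2 * e2 - 1) + (t * k1) * c1);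
    last by rewrite hb1; ring.
  by rewrite rpredD ?rpredB ?dvdz_mull ?dvdz_mulr.
case Fc: (c1 %| (ie2 * t) * b1 - c2)%Z => //=.
rewrite (_ : ie2 * t * g1 + b2 = lam * (t * C1 + B2) + ((lam * t * C1) * (ie2 * e2 - 1)
  + k2 * (ie2 * t * b1 - c2) - (ie2 * t * q1) * c1)); last by rewrite hg1 hb2; ring.
rewrite [X in _ = X]rpredDr; last by rewrite rpredB ?rpredD ?dvdz_mull ?dvdz_mulr.
by rewrite Gauss_dvdzr // coprimez_sym.
Qed.

Lemma phase2_twist_int (c1 c2 e1 e2 ie1 ie2 B1 B2 C2 b1 b2 g2 k1 k2 q2 P : int) :
  (c2 %| ie1 * e1 - 1)%Z -> (c2 %| ie2 * e2 - 1)%Z ->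
  b1 = B1 - k1 * c1 -> b2 = e2 * ie1 * B2 - k2 * c2 ->
  g2 = e2 * ie1 * e1 * C2 + k1 * (e2 * ie1 * B2) - q2 * c2 ->
  (c2 %| P * B2 - c1 * e1)%Z -> (c2 %| P * C2 + B1)%Z ->
  (c2 %| (ie2 * P) * b2 - c1)%Z && (c2 %| (ie2 * P) * g2 + b1)%Z.
Proof.
move=> i1 i2 hb1 hb2 hg2 h1 h2.
have hE : (c2 %| ie2 * e2 * ie1 * e1 - 1)%Z.
  rewrite (_ : _ - 1 = (ie2 * e2 - 1) * (ie1 * e1) + (ie1 * e1 - 1)); last by ring.
  by rewrite rpredD ?dvdz_mulr.
apply/andP; split.
  rewrite (_ : ie2 * P * b2 - c1 =
    ie2 * e2 * ie1 * (P * B2 - c1 * e1) + c1 * (ie2 * e2 * ie1 * e1 - 1)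
    - (ie2 * P * k2) * c2); last by rewrite hb2; ring.
  by rewrite rpredB ?rpredD ?dvdz_mull ?dvdz_mulr.
rewrite (_ : ie2 * P * g2 + b1 = (P * C2 + B1) + (P * C2) * (ie2 * e2 * ie1 * e1 - 1)
  + (k1 * ie2 * e2 * ie1) * (P * B2 - c1 * e1) + (k1 * c1) * (ie2 * e2 * ie1 * e1 - 1)
  - (ie2 * P * q2) * c2); last by rewrite hg2 hb1; ring.
apply: rpredB; last exact: dvdz_mull.
by do 3 (apply: rpredD; last exact: dvdz_mull).
Qed.

(* The change of variables behind the twisted multiplicativity: for [D1 = c1 e1], [D2 = c2 e2],
   the [c]-components of [(B1, C1, B2, C2)] are [B1 mod c1], [lam B2 mod c2] and twisted [C]'s,
   where [lam = e2 ie1] and [ie1], [ie2] invert [e1], [e2] modulo [c1 c2]. The [e]-components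
   are obtained by exchanging the roles of [c] and [e]. *)
Section Twist.
Variables (c1 c2 e1 e2 ie1 ie2 : nat).

Definition twB1 (B1 : nat) := affmod 1 0 c1 B1.
Definition twB2 (B2 : nat) := affmod (e2 * ie1) 0 c2 B2.
Definition twC1 (B1 B2 C1 : nat) :=
  affmod (e2 * ie1 * e2) ((e2 * ie1 * B2) %/ c2 * twB1 B1) c1 C1.
Definition twC2 (B1 B2 C2 : nat) :=
  affmod (e2 * ie1 * e1) (B1 %/ c1 * (e2 * ie1 * B2)) c2 C2.

Hypotheses (inv_e1 : ((c1 * c2)%N%:Z %| ie1%:Z * e1%:Z - 1)%Z)
           (inv_e2 : ((c1 * c2)%N%:Z %| ie2%:Z * e2%:Z - 1)%Z).

Lemma twist_unit_inv : ((c1 * c2)%N%:Z %| (e2 * ie1)%N%:Z * (e1 * ie2)%N%:Z - 1)%Z.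
Proof.
rewrite !PoszM (_ : _ - 1 = (ie2%:Z * e2%:Z - 1) * (ie1%:Z * e1%:Z) + (ie1%:Z * e1%:Z - 1)).
  by rewrite rpredD ?dvdz_mulr.
by ring.
Qed.

Lemma twist_unit_coprime : coprimez (e2 * ie1)%N%:Z (c1 * c2)%N%:Z.
Proof. exact: coprimez_of_inv twist_unit_inv. Qed.

Variables (B1 B2 C1 C2 : nat).

Lemma twB1E : (twB1 B1)%:Z = B1%:Z - (B1 %/ c1)%N%:Z * c1%:Z.
Proof. by rewrite /twB1 /affmod mul1n addn0 Posz_modn. Qed.

Lemma twB2E :
  (twB2 B2)%:Z = (e2 * ie1)%N%:Z * B2%:Z - ((e2 * ie1 * B2) %/ c2)%N%:Z * c2%:Z.
Proof. by rewrite /twB2 /affmod addn0 Posz_modn PoszM. Qed.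

Lemma twC1E : exists q : int, (twC1 B1 B2 C1)%:Z =
  (e2 * ie1)%N%:Z * e2%:Z * C1%:Z + ((e2 * ie1 * B2) %/ c2)%N%:Z * (twB1 B1)%:Z - q * c1%:Z.
Proof. by eexists; rewrite /twC1 /affmod Posz_modn PoszD !PoszM. Qed.

Lemma twC2E : exists q : int, (twC2 B1 B2 C2)%:Z =
  (e2 * ie1)%N%:Z * e1%:Z * C2%:Z + (B1 %/ c1)%N%:Z * ((e2 * ie1)%N%:Z * B2%:Z) - q * c2%:Z.
Proof. by eexists; rewrite /twC2 /affmod Posz_modn PoszD !PoszM. Qed.

Lemma primitive_twist1 : primitive c1 (twB1 B1) (twC1 B1 B2 C1) = primitive c1 B1 C1.
Proof.
have [q eC1] := twC1E.
apply: (@primitive_lin_change _ _ _ _ _ ((e2 * ie1)%N%:Z * e2%:Z) ((e1 * ie2 * ie2)%N%:Z) 1 1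
  ((e2 * ie1 * B2) %/ c2)%N%:Z).
- rewrite (_ : _ - 1 = ((e2 * ie1)%N%:Z * (e1 * ie2)%N%:Z - 1) * (ie2%:Z * e2%:Z)
    + (ie2%:Z * e2%:Z - 1)); last by rewrite !PoszM; ring.
  by rewrite rpredD ?dvdz_mulr ?(dvdz_factorl twist_unit_inv) ?(dvdz_factorl inv_e2).
- by rewrite mulr1 subrr dvdz0.
- by rewrite twB1E mul1r addrAC subrr add0r rpredN dvdz_mull.
- by rewrite eC1 addrAC subrr add0r rpredN dvdz_mull.
Qed.

Lemma primitive_twist2 : primitive c2 (twB2 B2) (twC2 B1 B2 C2) = primitive c2 B2 C2.
Proof.
have [q eC2] := twC2E.
apply: (@primitive_lin_change _ _ _ _ _ ((e2 * ie1)%N%:Z * e1%:Z) ie2%:Z (e2 * ie1)%N%:Z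
  (e1 * ie2)%N%:Z (B1 %/ c1)%N%:Z).
- rewrite (_ : _ - 1 = (e2 * ie1)%N%:Z * (e1 * ie2)%N%:Z - 1); last by rewrite !PoszM; ring.
  exact: dvdz_factorr twist_unit_inv.
- exact: dvdz_factorr twist_unit_inv.
- by rewrite twB2E addrAC subrr add0r rpredN dvdz_mull.
- rewrite eC2 twB2E (_ : _ - _ = ((B1 %/ c1)%N%:Z * ((e2 * ie1 * B2) %/ c2)%N%:Z - q) * c2%:Z).
    exact: dvdz_mull.
  by ring.
Qed.

Lemma klcond_twist :
  ((c1 * c2)%N%:Z %| c1%:Z * e1%:Z * C2%:Z + B1%:Z * B2%:Z + C1%:Z * (c2%:Z * e2%:Z))%Z
  = klcond c1 c2 (twB1 B1) (twC1 B1 B2 C1) (twB2 B2) (twC2 B1 B2 C2).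
Proof.
have [q1 eC1] := twC1E; have [q2 eC2] := twC2E.
rewrite klcondE !PoszM eC1 eC2 twB2E twB1E.
set K := _ + _ + C1%:Z * _.
rewrite (_ : c1%:Z * _ + _ + _ * c2%:Z =
  (e2 * ie1)%N%:Z * K - c1%:Z * c2%:Z * (q1 + q2)); last first.
  by rewrite /K !PoszM; ring.
rewrite -PoszM rpredBr; last exact: dvdz_mulr.
by rewrite Gauss_dvdzr // coprimez_sym twist_unit_coprime.
Qed.

Lemma tcond_twist (t : int) :
  (c1%:Z %| t * B1%:Z - c2%:Z * e2%:Z)%Z && (c1%:Z %| t * C1%:Z + B2%:Z)%Z
  = tcond c1 c2 (ie2%:Z * t) (twB1 B1) (twC1 B1 B2 C1) (twB2 B2).
Proof.
have [q1 eC1] := twC1E; rewrite /tcond.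
apply: (tcond_twist_int t _ _ twB1E eC1 twB2E).
- exact: dvdz_factorl inv_e2.
- by move: twist_unit_coprime; rewrite [X in coprimez _ X]PoszM coprimezMr => /andP [].
Qed.

Lemma phase2_twist (P : int) : (0 < c2)%N ->
  (c2%:Z %| P * B2%:Z - (c1 * e1)%N%:Z)%Z -> (c2%:Z %| P * C2%:Z + B1%:Z)%Z ->
  primitive c2 (twB2 B2) (twC2 B1 B2 C2) ->
  (c2%:Z %| (twB2 B2)%:Z * (twB1 B1)%:Z + (twC2 B1 B2 C2)%:Z * c1%:Z)%Z ->
  (c2%:Z %| phase2 c1 c2 (twB1 B1) (twB2 B2) (twC2 B1 B2 C2) - ie2%:Z * P)%Z.
Proof.
move=> c2_gt0 hB hC prim2 kl2; have [q2 eC2] := twC2E.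
rewrite /phase2 (dvdz_bez_phaseE _ (bez_spec c2_gt0 prim2) kl2).
apply: (@phase2_twist_int c1%:Z c2%:Z e1%:Z e2%:Z ie1%:Z ie2%:Z B1%:Z B2%:Z C2%:Z _ _ _
  (B1 %/ c1)%N%:Z ((e2 * ie1 * B2) %/ c2)%N%:Z q2) => //.
- exact: dvdz_factorr inv_e1.
- exact: dvdz_factorr inv_e2.
- exact: twB1E.
- by rewrite twB2E PoszM.
Qed.

End Twist.

Local Open Scope complex_scope.

Section Characters.
Variable R : realType.

Lemma eeD (x y : R) : ee (x + y) = ee x * ee y.
Proof. by rewrite /ee mulrDr cosD sinD /=; congr (_ +i* _); rewrite addrC. Qed.

Lemma ee0 : ee (0 : R) = 1.
Proof. by rewrite /ee mulr0 cos0 sin0. Qed.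

Lemma ee_nat (n : nat) : ee (n%:R : R) = 1.
Proof.
elim: n => [|n IH]; first by rewrite ee0.
rewrite -addn1 natrD eeD IH mul1r /ee mulr1.
by rewrite (_ : 2 * pi = pi *+ 2) ?cos2pi ?sin2pi // mulr_natl.
Qed.

Lemma eeN (x : R) : ee (- x) = (ee x)^-1.
Proof.
have h : ee x * ee (- x) = 1 by rewrite -eeD subrr ee0.
have nz : ee x != 0 by apply: contra_eqN h => /eqP ->; rewrite mul0r eq_sym oner_neq0.
by rewrite -(mulKf nz (ee (- x))) h mulr1.
Qed.

Lemma ee_int (n : int) : ee (n%:~R : R) = 1.
Proof. by case: n => n; rewrite ?NegzE ?rmorphN /= ?eeN -pmulrn ee_nat ?invr1. Qed.

Lemma eDD (k l : int) (D : nat) : eD R (k + l) D = eD R k D * eD R l D.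
Proof. by rewrite /eD rmorphD /= mulrDl eeD. Qed.

Lemma eD_dvd (k : int) (D : nat) : (0 < D)%N -> (D%:Z %| k)%Z -> eD R k D = 1.
Proof.
move=> D0 /dvdzP [q ->]; rewrite /eD rmorphM /= -mulrA.
by rewrite -pmulrn divff ?mulr1 ?ee_int // pnatr_eq0 -lt0n.
Qed.

Lemma eD_mod (k l : int) (D : nat) : (0 < D)%N -> (D%:Z %| k - l)%Z -> eD R k D = eD R l D.
Proof. by move=> D0 h; rewrite -(subrK l k) eDD eD_dvd // mul1r. Qed.

Lemma eDM (k : int) (D m : nat) : (0 < m)%N -> eD R (k * m%:Z) (D * m) = eD R k D.
Proof.
move=> m0; have [->|D0] := posnP D; first by rewrite mul0n /eD !invr0 !mulr0.
rewrite /eD rmorphM /= natrM -pmulrn invfM mulrACA divff ?mulr1 //.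
by rewrite pnatr_eq0 -lt0n.
Qed.

Lemma ee_neq1 (x : R) : 0 < x < 1 -> ee x != 1.
Proof.
move=> /andP [x0 x1]; apply/eqP => h; set z := ee (x / 2).
have Imz0 : complex.Im z != 0.
  have p0 := pi_gt0 R.
  by rewrite /z /= gt_eqF // sin_gt0_pi //; apply/andP; split; nra.
have : (z - 1) * (z + 1) = 0.
  by rewrite mulrDr mulr1 mulrBl mul1r -eeD -splitr h addrA subrK subrr.
move/eqP; rewrite mulf_eq0 subr_eq0 addr_eq0 => /orP [] /eqP ez; move: Imz0.
  by rewrite ez /= eqxx.
by rewrite ez /= oppr0 eqxx.
Qed.

Lemma eD_neq1 (k : int) (D : nat) : (0 < D)%N -> ~~ (D%:Z %| k)%Z -> eD R k D != 1.
Proof.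
move=> D0 nd; have Dz : D%:Z != 0 by rewrite eqz_nat -lt0n.
rewrite (@eD_mod k (k %% D%:Z)%Z) //; last by rewrite {1}(divz_eq k D%:Z) addrK dvdz_mull.
have r0 := modz_ge0 k Dz; have rD := ltz_mod k Dz.
have rn0 : (k %% D%:Z)%Z != 0 by apply: contra nd => /eqP/dvdz_mod0P.
apply: ee_neq1; apply/andP; split.
  by rewrite divr_gt0 // ?ltr0z ?lt_def ?rn0 // ?ltr0n // pnatr_eq0 ler0n andbT -lt0n.
by rewrite ltr_pdivrMr ?ltr0n // mul1r pmulrn ltr_int; move: rD; rewrite ger0_norm.
Qed.

Lemma eD_natM (k : int) (D x : nat) : eD R (x%:Z * k) D = eD R k D ^+ x.
Proof.
elim: x => [|x IH]; first by rewrite mul0r expr0 /eD mul0r ee0.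
by rewrite -addn1 PoszD mulrDl mul1r eDD IH addn1 exprSr.
Qed.

Lemma sum_eD (k : int) (D : nat) : (0 < D)%N ->
  \sum_(x < D) eD R ((x : nat)%:Z * k) D = if (D%:Z %| k)%Z then D%:R else 0.
Proof.
move=> D0; case: ifP => dk.
  by rewrite (eq_bigr (fun _ => 1)) ?sumr_const ?card_ord // => x _; rewrite eD_dvd // dvdz_mull.
under eq_bigr do rewrite eD_natM.
have := subrX1 (eD R k D) D; rewrite -eD_natM eD_dvd ?dvdz_mulr // subrr.
by move/eqP; rewrite eq_sym mulf_eq0 subr_eq0 (negbTE (eD_neq1 _ _)) ?dk // => /eqP.
Qed.

Lemma eD_crt (c e i j : nat) (k : int) : (0 < c)%N -> (0 < e)%N -> coprime c e ->
  (c%:Z %| i%:Z * e%:Z - 1)%Z -> (e%:Z %| j%:Z * c%:Z - 1)%Z ->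
  eD R k (c * e) = eD R (i%:Z * k) c * eD R (j%:Z * k) e.
Proof.
move=> c0 e0 ce hi hj.
rewrite -(eDM (i%:Z * k) c e0) -(eDM (j%:Z * k) e c0) [(e * c)%N]mulnC -eDD.
apply: eD_mod; first by rewrite muln_gt0 c0 e0.
rewrite (_ : k - _ = - (k * ((i%:Z * e%:Z - 1) + j%:Z * c%:Z))); last by ring.
rewrite rpredN dvdz_mull // PoszM Gauss_dvdz ?coprimezE //.
rewrite rpredD ?dvdz_mull ?dvdzz //=.
rewrite (_ : _ + _ = (j%:Z * c%:Z - 1) + i%:Z * e%:Z); last by ring.
by rewrite rpredD ?dvdz_mull ?dvdzz.
Qed.

End Characters.

Lemma exchange_big2 (V : nmodType) (m n p : nat) (F : 'I_m -> 'I_n -> 'I_p -> V) :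
  \sum_(x < m) \sum_(y < n) \sum_(a < p) F x y a = \sum_(a < p) \sum_(x < m) \sum_(y < n) F x y a.
Proof. by under eq_bigr do rewrite exchange_big; rewrite exchange_big. Qed.

Lemma exchange_big2_4 (V : nmodType) (m n p q r s : nat)
  (F : 'I_m -> 'I_n -> 'I_p -> 'I_q -> 'I_r -> 'I_s -> V) :
  \sum_(x < m) \sum_(y < n) \sum_(a < p) \sum_(b < q) \sum_(c < r) \sum_(d < s) F x y a b c d =
  \sum_(a < p) \sum_(b < q) \sum_(c < r) \sum_(d < s) \sum_(x < m) \sum_(y < n) F x y a b c d.
Proof.
rewrite (exchange_big2 (fun x y a => \sum_(b < q) \sum_(c < r) \sum_(d < s) F x y a b c d)).
apply: eq_bigr => a _.
rewrite (exchange_big2 (fun x y b => \sum_(c < r) \sum_(d < s) F x y a b c d)).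
apply: eq_bigr => b _; rewrite (exchange_big2 (fun x y c => \sum_(d < s) F x y a b c d)).
by apply: eq_bigr => c _; rewrite (exchange_big2 (fun x y d => F x y a b c d)).
Qed.

Lemma mulr_suml4 (V : pzSemiRingType) (m n p q : nat) (F : 'I_m -> 'I_n -> 'I_p -> 'I_q -> V)
    (g : V) :
  (\sum_(a < m) \sum_(b < n) \sum_(c < p) \sum_(d < q) F a b c d) * g =
  \sum_(a < m) \sum_(b < n) \sum_(c < p) \sum_(d < q) (F a b c d * g).
Proof.
rewrite mulr_suml; apply: eq_bigr => a _; rewrite mulr_suml; apply: eq_bigr => b _.
by rewrite mulr_suml; apply: eq_bigr => c _; rewrite mulr_suml.
Qed.

Section ReducedSum.
Variable R : realType.

Definition Sterm (a t : int) (u D1 D2 B1 B2 C1 C2 : nat) : R[i] :=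
  if [&& primitive D1 B1 C1, primitive D2 B2 C2, klcond D1 D2 B1 C1 B2 C2, B2 == u
       & tcond D1 D2 t B1 C1 B2]
  then eD R (a * B1%:Z) D1 * eD R (phase2 D1 D2 B1 B2 C2) D2 else 0.

Definition Sred (a t : int) (u D1 D2 : nat) : R[i] :=
  \sum_(B1 < D1) \sum_(B2 < D2) \sum_(C1 < D1) \sum_(C2 < D2) Sterm a t u D1 D2 B1 B2 C1 C2.

(* Summing over [x] and [y] picks out [Y1 D2 - Z1 B2 = t (mod D1)] and [B2 = u (mod D2)]. *)
Lemma Shat_Sred (a t : int) (u D1 D2 : nat) : (0 < D1)%N -> (0 < D2)%N -> (u < D2)%N ->
  Shat R a u%:Z t 1 D1 D2 = Sred a t u D1 D2.
Proof.
move=> D1_gt0 D2_gt0 uD; rewrite /Shat /KlS /Sred.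
under eq_bigr do under eq_bigr do rewrite mulr_suml4 mulr_suml4.
rewrite exchange_big2_4 mulr_sumr; apply: eq_bigr => B1 _.
rewrite [RHS]exchange_big mulr_sumr; apply: eq_bigr => C1 _.
rewrite mulr_sumr; apply: eq_bigr => B2 _.
rewrite mulr_sumr; apply: eq_bigr => C2 _.
rewrite /= /Sterm /primitive /klcond.
have [p1|p1] := boolP (gcdn (gcdn B1 C1) D1 == 1)%N;
  have [p2|p2] := boolP (gcdn (gcdn B2 C2) D2 == 1)%N;
  have [k|k] := boolP (D1 * D2 %| D1 * C2 + B1 * B2 + C1 * D2)%N; rewrite /=;
  try by rewrite big1 ?mulr0 // => x _; rewrite big1 // => y _; rewrite !mul0r.
set P1 := (bez D1 B1 C1).1 * _ - _.
rewrite -/(phase2 D1 D2 B1 B2 C2); set P2 := phase2 _ _ _ _ _.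
have split_term (x y : nat) : eD R (a * B1 + x%:Z * P1) D1 * eD R (y%:Z * B2 + 1 * P2) D2 *
   eD R (- (x%:Z * t)) D1 * eD R (- (y%:Z * u%:Z)) D2 =
   (eD R (a * B1) D1 * eD R P2 D2) * (eD R (x%:Z * (P1 - t)) D1 * eD R (y%:Z * (B2%:Z - u%:Z)) D2).
  by rewrite !mulrBr !eDD !mul1r; ring.
under eq_bigr => x _ do under eq_bigr => y _ do rewrite split_term.
under eq_bigr => x _ do rewrite -mulr_sumr -mulr_sumr.
rewrite -mulr_sumr -mulr_suml !sum_eD //.
rewrite (_ : (D2%:Z %| B2%:Z - u%:Z)%Z = (B2 == u :> nat)); last first.
  by rewrite -eqz_mod_dvd !modz_nat !modn_small.
rewrite /P1 (dvdz_bez_phaseE t (bez_spec D1_gt0 p1) (klcond_dvd1 k)) -/(tcond D1 D2 t B1 C1 B2).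
case: (B2 == u :> nat); case: tcond; rewrite /= ?mulr0 ?mul0r //.
  by rewrite [LHS]mulrC -mulrA -natrM mulrA mulfK // pnatr_eq0 -lt0n muln_gt0 D1_gt0 D2_gt0.
by rewrite !mulr0.
Qed.

Lemma cabsM (z w : R[i]) : cabs (z * w) = cabs z * cabs w.
Proof. by rewrite /cabs normrM (normc_def z) (normc_def w) /= mulr0 subr0. Qed.

Lemma cabs_ge0 (z : R[i]) : 0 <= cabs z.
Proof. by rewrite /cabs normc_def /= sqrtr_ge0. Qed.

Definition Sabs (a s : int) (D1 D2 : nat) : R := \sum_(u < D2) cabs (Sred a s u D1 D2).

Lemma Sabs_ge0 (a s : int) (D1 D2 : nat) : 0 <= Sabs a s D1 D2.
Proof. by apply: sumr_ge0 => u _; apply: cabs_ge0. Qed.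

Lemma Rcal_Sabs (t : int) (D1 D2 : nat) : (0 < D1)%N -> (0 < D2)%N ->
  Rcal R t D1 D2 = \big[Num.max/0]_(a < D1 | coprime a D1)
    \big[Num.max/0]_(b < D1 | coprime b D1) Sabs (a : nat)%:Z ((b : nat)%:Z * t) D1 D2.
Proof.
move=> D1_gt0 D2_gt0; apply: eq_bigr => a _; apply: eq_bigr => b _.
by apply: eq_bigr => u _; rewrite Shat_Sred.
Qed.

Lemma Sterm_congr (a a' s s' : int) (u D1 D2 B1 B2 C1 C2 : nat) : (0 < D1)%N ->
  (D1%:Z %| a - a')%Z -> (D1%:Z %| s - s')%Z ->
  Sterm a s u D1 D2 B1 B2 C1 C2 = Sterm a' s' u D1 D2 B1 B2 C1 C2.
Proof.
move=> D1_gt0 ha hs; rewrite /Sterm /tcond.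
have shift (x y : int) : (D1%:Z %| s * x + y)%Z = (D1%:Z %| s' * x + y)%Z.
  rewrite (_ : s * x + y = (s' * x + y) + (s - s') * x); last by ring.
  by rewrite rpredDr // dvdz_mulr.
rewrite !shift (@eD_mod _ (a * B1%:Z) (a' * B1%:Z)) //.
by rewrite -mulrBl dvdz_mulr.
Qed.

Lemma Sabs_congr (a a' s s' : int) (D1 D2 : nat) : (0 < D1)%N ->
  (D1%:Z %| a - a')%Z -> (D1%:Z %| s - s')%Z -> Sabs a s D1 D2 = Sabs a' s' D1 D2.
Proof.
move=> D1_gt0 ha hs; apply: eq_bigr => u _; congr cabs.
by do 4 (apply: eq_bigr => ? _); apply: Sterm_congr.
Qed.

Lemma if_and5_mul (a1 a2 b1 b2 c1 c2 d1 d2 f1 f2 : bool) (X Y Z : R[i]) :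
  ([&& a1, b1, c1, d1 & f1] -> [&& a2, b2, c2, d2 & f2] -> X = Y * Z) ->
  (if [&& a1 && a2, b1 && b2, c1 && c2, d1 && d2 & f1 && f2] then X else 0) =
  (if [&& a1, b1, c1, d1 & f1] then Y else 0) * (if [&& a2, b2, c2, d2 & f2] then Z else 0).
Proof.
by case: a1 b1 c1 d1 f1 => [] [] [] [] []; rewrite /= ?mul0r //;
  case: a2 b2 c2 d2 f2 => [] [] [] [] []; rewrite /= ?mulr0 // => ->.
Qed.

Lemma eD_twB1 (c ie B : nat) (a : int) : (0 < c)%N ->
  eD R (ie%:Z * (a * B%:Z)) c = eD R ((a * ie%:Z) * (twB1 c B)%:Z) c.
Proof.
move=> c_gt0; apply: eD_mod => //; rewrite /twB1 /affmod mul1n addn0 Posz_modn.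
by rewrite (_ : _ - _ = (a * ie%:Z * (B %/ c)%N%:Z) * c%:Z) ?dvdz_mull //; ring.
Qed.

End ReducedSum.

Lemma dvdz_affmod (l c x : nat) : (c%:Z %| x%:Z * l%:Z - (affmod l 0 c x)%:Z)%Z.
Proof.
rewrite /affmod addn0 Posz_modn PoszM (_ : _ - _ = ((l * x) %/ c)%N%:Z * c%:Z) ?dvdz_mull //.
by ring.
Qed.

Section Multiplicativity.
Variable R : realType.
Variables (c1 c2 e1 e2 ie1 ie2 ic1 ic2 : nat).
Hypotheses (c1_gt0 : (0 < c1)%N) (c2_gt0 : (0 < c2)%N) (e1_gt0 : (0 < e1)%N) (e2_gt0 : (0 < e2)%N)
  (coprime_ce : coprime (c1 * c2) (e1 * e2))
  (inv_e1 : ((c1 * c2)%N%:Z %| ie1%:Z * e1%:Z - 1)%Z)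
  (inv_e2 : ((c1 * c2)%N%:Z %| ie2%:Z * e2%:Z - 1)%Z)
  (inv_c1 : ((e1 * e2)%N%:Z %| ic1%:Z * c1%:Z - 1)%Z)
  (inv_c2 : ((e1 * e2)%N%:Z %| ic2%:Z * c2%:Z - 1)%Z).

Local Notation cB1 := (twB1 c1).
Local Notation cB2 := (twB2 c2 e2 ie1).
Local Notation cC1 := (twC1 c1 c2 e2 ie1).
Local Notation cC2 := (twC2 c1 c2 e1 e2 ie1).
Local Notation eB1 := (twB1 e1).
Local Notation eB2 := (twB2 e2 c2 ic1).
Local Notation eC1 := (twC1 e1 e2 c2 ic1).
Local Notation eC2 := (twC2 e1 e2 c1 c2 ic1).
Local Notation Sc a t u := (Sterm R (a * ie1%:Z) (ie2%:Z * t) (cB2 u) c1 c2).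
Local Notation Se a t u := (Sterm R (a * ic1%:Z) (ic2%:Z * t) (eB2 u) e1 e2).

Lemma coprime_c1e1 : coprime c1 e1.
Proof. by move: coprime_ce; rewrite coprimeMl !coprimeMr => /andP [/andP []]. Qed.

Lemma coprime_c2e2 : coprime c2 e2.
Proof. by move: coprime_ce; rewrite coprimeMl !coprimeMr => /andP [_ /andP []]. Qed.

Lemma coprime_twist_units : [/\ coprime (e2 * ie1) c1, coprime (e2 * ie1) c2,
  coprime (c2 * ic1) e1 & coprime (c2 * ic1) e2].
Proof.
have := twist_unit_coprime inv_e1 inv_e2; have := twist_unit_coprime inv_c1 inv_c2.
rewrite ![in coprimez _ (Posz (_ * _))]PoszM !coprimezMr !coprimezE.
by move=> /andP [-> ->] /andP [-> ->].
Qed.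

Lemma eD_phase_mul (a : int) (B1 B2 C1 C2 : nat) :
  primitive (c2 * e2) B2 C2 -> klcond (c1 * e1) (c2 * e2) B1 C1 B2 C2 ->
  primitive c2 (cB2 B2) (cC2 B1 B2 C2) ->
  klcond c1 c2 (cB1 B1) (cC1 B1 B2 C1) (cB2 B2) (cC2 B1 B2 C2) ->
  primitive e2 (eB2 B2) (eC2 B1 B2 C2) ->
  klcond e1 e2 (eB1 B1) (eC1 B1 B2 C1) (eB2 B2) (eC2 B1 B2 C2) ->
  eD R (a * B1%:Z) (c1 * e1) * eD R (phase2 (c1 * e1) (c2 * e2) B1 B2 C2) (c2 * e2) =
  eD R (a * ie1%:Z * (cB1 B1)%:Z) c1 * eD R (phase2 c1 c2 (cB1 B1) (cB2 B2) (cC2 B1 B2 C2)) c2 *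
  (eD R (a * ic1%:Z * (eB1 B1)%:Z) e1 * eD R (phase2 e1 e2 (eB1 B1) (eB2 B2) (eC2 B1 B2 C2)) e2).
Proof.
move=> prim2 kl2 pc2 klc pe2 kle.
have ce2_gt0 : (0 < c2 * e2)%N by rewrite muln_gt0 c2_gt0 e2_gt0.
set P := phase2 (c1 * e1) (c2 * e2) B1 B2 C2.
have /andP [hPB hPC] : ((c2 * e2)%N%:Z %| P * B2%:Z - (c1 * e1)%N%:Z)%Z &&
                       ((c2 * e2)%N%:Z %| P * C2%:Z + B1%:Z)%Z.
  by rewrite -(dvdz_bez_phaseE P (bez_spec ce2_gt0 prim2) (klcond_dvd2 kl2)) subrr dvdz0.
move: hPB hPC; rewrite !dvdz_coprime_mulE ?coprime_c2e2 //.
move=> /andP [hPBc hPBe] /andP [hPCc hPCe].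
rewrite (eD_crt _ (a * B1%:Z) c1_gt0 e1_gt0 coprime_c1e1 (dvdz_factorl inv_e1)
  (dvdz_factorl inv_c1)).
rewrite (eD_crt _ P c2_gt0 e2_gt0 coprime_c2e2 (dvdz_factorr inv_e2) (dvdz_factorr inv_c2)).
rewrite (eD_twB1 _ _ _ _ c1_gt0) (eD_twB1 _ _ _ _ e1_gt0).
rewrite (eD_mod _ c2_gt0 (phase2_twist inv_e1 inv_e2 c2_gt0 hPBc hPCc pc2 (klcond_dvd2 klc))).
rewrite (eD_mod _ e2_gt0 (phase2_twist inv_c1 inv_c2 e2_gt0 _ hPCe pe2 (klcond_dvd2 kle))).
  by rewrite mulrACA.
by rewrite mulnC.
Qed.

Lemma Sterm_mul (a t : int) (u B1 B2 C1 C2 : nat) : (B2 < c2 * e2)%N -> (u < c2 * e2)%N ->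
  Sterm R a t u (c1 * e1) (c2 * e2) B1 B2 C1 C2 =
  Sc a t u (cB1 B1) (cB2 B2) (cC1 B1 B2 C1) (cC2 B1 B2 C2) *
  Se a t u (eB1 B1) (eB2 B2) (eC1 B1 B2 C1) (eC2 B1 B2 C2).
Proof.
move=> B2_lt u_lt; have [_ cop_c2 _ cop_e2] := coprime_twist_units.
have p1 : primitive (c1 * e1) B1 C1 =
    primitive c1 (cB1 B1) (cC1 B1 B2 C1) && primitive e1 (eB1 B1) (eC1 B1 B2 C1).
  by rewrite (primitive_twist1 inv_e1 inv_e2) (primitive_twist1 inv_c1 inv_c2) -coprimeMr.
have p2 : primitive (c2 * e2) B2 C2 =
    primitive c2 (cB2 B2) (cC2 B1 B2 C2) && primitive e2 (eB2 B2) (eC2 B1 B2 C2).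
  by rewrite (primitive_twist2 inv_e1 inv_e2) (primitive_twist2 inv_c1 inv_c2) -coprimeMr.
have kl : klcond (c1 * e1) (c2 * e2) B1 C1 B2 C2 =
    klcond c1 c2 (cB1 B1) (cC1 B1 B2 C1) (cB2 B2) (cC2 B1 B2 C2) &&
    klcond e1 e2 (eB1 B1) (eC1 B1 B2 C1) (eB2 B2) (eC2 B1 B2 C2).
  rewrite -(klcond_twist inv_e1 inv_e2) -(klcond_twist inv_c1 inv_c2).
  rewrite !klcondE mulnACA dvdz_coprime_mulE // !PoszM.
  by congr andb; congr dvdz; ring.
have eq_u : (B2 == u) = (cB2 B2 == cB2 u) && (eB2 B2 == eB2 u).
  apply/eqP/andP => [-> // | [/eqP h1 /eqP h2]].
  exact: (affmod_crt_inj coprime_c2e2 cop_c2 cop_e2 B2_lt u_lt h1 h2).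
have tc : tcond (c1 * e1) (c2 * e2) t B1 C1 B2 =
    tcond c1 c2 (ie2%:Z * t) (cB1 B1) (cC1 B1 B2 C1) (cB2 B2) &&
    tcond e1 e2 (ic2%:Z * t) (eB1 B1) (eC1 B1 B2 C1) (eB2 B2).
  rewrite -(tcond_twist inv_e1 inv_e2) -(tcond_twist inv_c1 inv_c2) /tcond.
  rewrite !dvdz_coprime_mulE ?coprime_c1e1 // !PoszM [e2%:Z * c2%:Z]mulrC.
  by case: (c1%:Z %| _)%Z; case: (c1%:Z %| _)%Z; case: (e1%:Z %| _)%Z; case: (e1%:Z %| _)%Z.
rewrite /Sterm p1 p2 kl eq_u tc; apply: if_and5_mul.
move=> /and5P [_ pc2 klc _ _] /and5P [_ pe2 kle _ _].
by apply: (@eD_phase_mul a B1 B2 C1 C2); rewrite ?p2 ?kl ?pc2 ?pe2 ?klc ?kle.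
Qed.

Lemma Sred_mul (a t : int) (u : nat) : (u < c2 * e2)%N ->
  Sred R a t u (c1 * e1) (c2 * e2) =
  Sred R (a * ie1%:Z) (ie2%:Z * t) (cB2 u) c1 c2 * Sred R (a * ic1%:Z) (ic2%:Z * t) (eB2 u) e1 e2.
Proof.
move=> u_lt; have [cop_c1 cop_c2 cop_e1 cop_e2] := coprime_twist_units.
have cop (l c m : nat) : coprime l c -> coprime m c -> coprime (l * m) c.
  by move=> lc mc; rewrite coprimeMl lc.
have := coprime_ce; rewrite coprimeMl !coprimeMr => /andP [/andP [_ c1e2] /andP [c2e1 _]].
have e2c1 : coprime e2 c1 by rewrite coprime_sym.
have e1c2 : coprime e1 c2 by rewrite coprime_sym.
rewrite /Sred.
under eq_bigr => B1 _ do under eq_bigr => B2 _ do under eq_bigr => C1 _ do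
  under eq_bigr => C2 _ do rewrite (Sterm_mul _ _ _ _ _ (ltn_ord B2) u_lt).
under eq_bigr => B1 _ do under eq_bigr => B2 _ do under eq_bigr => C1 _ do
  rewrite (sum_affmod_crt _ _ (Sc a t u (cB1 B1) (cB2 B2) (cC1 B1 B2 C1))
    (Se a t u (eB1 B1) (eB2 B2) (eC1 B1 B2 C1)) c2_gt0 e2_gt0 coprime_c2e2
    (cop _ _ _ cop_c2 e1c2) (cop _ _ _ cop_e2 c1e2)).
under eq_bigr => B1 _ do under eq_bigr => B2 _ do
  rewrite (sum_affmod_crt _ _ (fun g1 => \sum_(g2 < c2) Sc a t u (cB1 B1) (cB2 B2) g1 g2)
    (fun g1 => \sum_(g2 < e2) Se a t u (eB1 B1) (eB2 B2) g1 g2) c1_gt0 e1_gt0 coprime_c1e1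
    (cop _ _ _ cop_c1 e2c1) (cop _ _ _ cop_e1 c2e1)).
under eq_bigr => B1 _ do
  rewrite (sum_affmod_crt _ _ (fun b2 => \sum_(g1 < c1) \sum_(g2 < c2) Sc a t u (cB1 B1) b2 g1 g2)
    (fun b2 => \sum_(g1 < e1) \sum_(g2 < e2) Se a t u (eB1 B1) b2 g1 g2) c2_gt0 e2_gt0
    coprime_c2e2 cop_c2 cop_e2).
by rewrite (sum_affmod_crt _ _
    (fun b1 => \sum_(b2 < c2) \sum_(g1 < c1) \sum_(g2 < c2) Sc a t u b1 b2 g1 g2)
    (fun b1 => \sum_(b2 < e2) \sum_(g1 < e1) \sum_(g2 < e2) Se a t u b1 b2 g1 g2)
    c1_gt0 e1_gt0 coprime_c1e1 (coprime1n _) (coprime1n _)).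
Qed.

Lemma Sabs_mul (a s : int) : Sabs R a s (c1 * e1) (c2 * e2) =
  Sabs R (a * ie1%:Z) (ie2%:Z * s) c1 c2 * Sabs R (a * ic1%:Z) (ic2%:Z * s) e1 e2.
Proof.
have [_ cop_c2 _ cop_e2] := coprime_twist_units.
rewrite /Sabs; under eq_bigr => u _ do rewrite (Sred_mul _ _ (ltn_ord u)) cabsM.
by rewrite (sum_affmod_crt _ _ (fun v => cabs (Sred R (a * ie1%:Z) (ie2%:Z * s) v c1 c2))
  (fun v => cabs (Sred R (a * ic1%:Z) (ic2%:Z * s) v e1 e2)) c2_gt0 e2_gt0 coprime_c2e2
  cop_c2 cop_e2).
Qed.

Lemma Rcal_crt (t : int) : Rcal R t (c1 * e1) (c2 * e2) =
  \big[Num.max/0]_(i < c1 | coprime i c1) \big[Num.max/0]_(j < e1 | coprime j e1)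
  \big[Num.max/0]_(i' < c1 | coprime i' c1) \big[Num.max/0]_(j' < e1 | coprime j' e1)
    (Sabs R (i : nat)%:Z ((i' : nat)%:Z * t) c1 c2 * Sabs R (j : nat)%:Z ((j' : nat)%:Z * t) e1 e2).
Proof.
have reduce (D D' x y l m : nat) : (0 < D)%N ->
    Sabs R (x%:Z * l%:Z) (m%:Z * (y%:Z * t)) D D' =
    Sabs R (affmod l 0 D x)%:Z ((affmod m 0 D y)%:Z * t) D D'.
  move=> D_gt0; apply: Sabs_congr => //; first exact: dvdz_affmod.
  by rewrite mulrA -mulrBl (mulrC m%:Z) dvdz_mulr // dvdz_affmod.
have inv_coprime (x y n m : nat) : ((n * m)%N%:Z %| x%:Z * y%:Z - 1)%Z -> coprime x n.
  by move/coprimez_of_inv; rewrite PoszM coprimezMr coprimezE => /andP [].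
rewrite Rcal_Sabs ?muln_gt0 ?c1_gt0 ?e1_gt0 ?c2_gt0 ?e2_gt0 //.
under eq_bigr => a _ do under eq_bigr => b _ do rewrite Sabs_mul !reduce //.
under eq_bigr => a _ do rewrite (bigmax_affmod_crt (fun i' j' =>
  Sabs R (affmod ie1 0 c1 a)%:Z (i'%:Z * t) c1 c2 * Sabs R (affmod ic1 0 e1 a)%:Z (j'%:Z * t) e1 e2)
  c1_gt0 e1_gt0 coprime_c1e1 (inv_coprime _ _ _ _ inv_e2) (inv_coprime _ _ _ _ inv_c2)).
by rewrite (bigmax_affmod_crt (fun i j =>
  \big[Num.max/0]_(i' < c1 | coprime i' c1) \big[Num.max/0]_(j' < e1 | coprime j' e1)
    (Sabs R i%:Z ((i' : nat)%:Z * t) c1 c2 * Sabs R j%:Z ((j' : nat)%:Z * t) e1 e2))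
  c1_gt0 e1_gt0 coprime_c1e1 (inv_coprime _ _ _ _ inv_e1) (inv_coprime _ _ _ _ inv_c1)).
Qed.

End Multiplicativity.

Local Close Scope complex_scope.

Theorem lemma4 (R : realType) (t : int) (C1 C2 E1 E2 : nat) :
  (0 < C1)%N -> (0 < C2)%N -> (0 < E1)%N -> (0 < E2)%N ->
  coprime (C1 * C2) (E1 * E2) ->
  Rcal R t (C1 * E1) (C2 * E2) = Rcal R t C1 C2 * Rcal R t E1 E2.
Proof.
move=> C1_gt0 C2_gt0 E1_gt0 E2_gt0 cop.
have C_gt0 : (0 < C1 * C2)%N by rewrite muln_gt0 C1_gt0 C2_gt0.
have E_gt0 : (0 < E1 * E2)%N by rewrite muln_gt0 E1_gt0 E2_gt0.
have /andP [cE1 cE2] : coprime E1 (C1 * C2) && coprime E2 (C1 * C2).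
  by rewrite -coprimeMl coprime_sym.
have /andP [cC1 cC2] : coprime C1 (E1 * E2) && coprime C2 (E1 * E2) by rewrite -coprimeMl.
have [iE1 inv_E1] := exists_modinv C_gt0 cE1; have [iE2 inv_E2] := exists_modinv C_gt0 cE2.
have [iC1 inv_C1] := exists_modinv E_gt0 cC1; have [iC2 inv_C2] := exists_modinv E_gt0 cC2.
rewrite (Rcal_crt R C1_gt0 C2_gt0 E1_gt0 E2_gt0 cop inv_E1 inv_E2 inv_C1 inv_C2).
by rewrite bigmax2_mul ?Rcal_Sabs // => i i'; apply: Sabs_ge0.
Qed.
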